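(* Let $(F,\delta)$ be a differential field of characteristic zero and $(F(t),\delta)$ a monomial extension of $(F,\delta)$. If $f\in F(t)$ is stable in $(F(t),\delta)$, then $\nu_p(f)\ge0$ for every irreducible normal polynomial $p\in F[t]$; i.e., every irreducible factor of the denominator of $f$ is a special polynomial.
   Context: A differential field $(K,\delta)$ is a field with an additive map $\delta$ satisfying the Leibniz rule. $(F(t),\delta)$ is a monomial extension of $(F,\delta)$ if $t$ is transcendental over $F$, the derivation on $F(t)$ extends that of $F$, and $\delta(t)\in F[t]$. A polynomial $p\in F[t]$ is normal if $\gcd(p,\delta(p))=1$ and special if $\gcd(p,\delta(p))=p$. For an irreducible $p\in F[t]$ and nonzero $f\in F(t)$, writing $f=p^m a/b$ with $m\in\mathbb{Z}$, $a,b\in F[t]$, $\gcd(a,b)=1$, $p\nmid ab$, the order is $\nu_p(f)=m$; $\nu_p(0)=+\infty$. An element $f$ is stable in $(F(t),\delta)$ if there is a sequence $(a_i)_{i\ge0}$ in $F(t)$ with $a_0=f$ and $\delta(a_{i+1})=a_i$ for all $i\in\mathbb{N}$. *)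

From HB Require Import structures.
From mathcomp Require Import all_boot all_order all_algebra.
Set Implicit Arguments. Unset Strict Implicit. Unset Printing Implicit Defensive.
Import Order.TTheory GRing.Theory Num.Theory.
Local Open Scope ring_scope.

(* embedding F[t] -> F(t) (mathcomp's notation is Local in fraction.v) *)
Notation "x %:F" := (@FracField.tofrac _ x).

Definition is_derivation (K : fieldType) (d : K -> K) : Prop :=
  (forall x y, d (x + y) = d x + d y) /\ (forall x y, d (x * y) = d x * y + x * d y).

(* (F(t), D) is a monomial extension of (F, d): F(t) = {fraction {poly F}}
   (t = 'X is transcendental), D a derivation extending d, D t in F[t]. *)
Definition monomial_ext (F : fieldType) (d : F -> F)
  (D : {fraction {poly F}} -> {fraction {poly F}}) : Prop :=
  is_derivation d /\ is_derivation D /\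
  (forall c : F, D ((c%:P)%:F) = ((d c)%:P)%:F) /\
  (exists q : {poly F}, D ('X%:F) = q%:F).

Definition normal_poly (F : fieldType) (D : {fraction {poly F}} -> {fraction {poly F}})
  (p : {poly F}) : Prop :=
  exists P : {poly F}, D (p%:F) = P%:F /\ coprimep p P.

Definition mult_poly (F : fieldType) (p a : {poly F}) : nat :=
  (\max_(m < size a | (p ^+ m %| a)%R) m)%N.

Definition nu (F : fieldType) (p : {poly F}) (f : {fraction {poly F}}) : int :=
  (mult_poly p (\n_(repr f)))%:Z - (mult_poly p (\d_(repr f)))%:Z.

Definition stable (F : fieldType) (D : {fraction {poly F}} -> {fraction {poly F}})
  (f : {fraction {poly F}}) : Prop :=
  exists a : nat -> {fraction {poly F}}, a 0%N = f /\ forall i, D (a i.+1) = a i.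

From HB Require Import structures.
From mathcomp Require Import all_boot all_order all_algebra.
From mathcomp Require Import ring zify.
Import Order.TTheory GRing.Theory Num.Theory.
Local Open Scope ring_scope.
Set Implicit Arguments. Unset Strict Implicit. Unset Printing Implicit Defensive.

(* Let p be irreducible and normal, so that p does not divide p' := D p.  If
   g = A / (p^(m+1) Q) with p dividing neither A nor Q, then
   D g = (p (A'Q - AQ') - (m+1) A p' Q) / (p^(m+2) Q^2), and in characteristic
   zero p divides none of m+1, A, p', Q: a pole of order m+1 at p becomes a pole
   of order exactly m+2.  If g has no pole at p, neither has D g.  So along a
   chain D a_(i+1) = a_i starting from a_0 = f with a pole at p, every a_i has a
   pole at p whose order drops by one at each step, which cannot go on forever. *)

Lemma coprimep_ndvdp (F : fieldType) (p q : {poly F}) :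
  (1 < size p)%N -> coprimep p q -> ~~ (p %| q).
Proof.
move=> size_p_gt1 pq; apply/negP => /coprimep_dvdl/(_ pq).
by rewrite coprimepp gtn_eqF.
Qed.

Section Multiplicity.
Variables (F : fieldType) (p : {poly F}).
Hypothesis p_irr : irreducible_poly p.
Implicit Types a b r s X A P Q : {poly F}.

Let p_neq0 : p != 0 := irredp_neq0 p_irr.
Let size_p_gt1 : (1 < size p)%N := p_irr.1.

Lemma irredp_coprime r : ~~ (p %| r) -> coprimep p r.
Proof.
move=> pNr; have [gcd1|gcdp_eq] := irredp_XsubCP p_irr (dvdp_gcdl p r).
  by rewrite -gcdp_eqp1.
by rewrite -(eqp_dvdl _ gcdp_eq) dvdp_gcdr in pNr.
Qed.

Lemma irredp_dvdM r s : (p %| r * s) = (p %| r) || (p %| s).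
Proof.
apply/idP/orP => [prs|[pr|ps]]; last 2 first.
- exact: dvdp_mulr.
- exact: dvdp_mull.
have [pr|pNr] := boolP (p %| r); first by left.
by right; rewrite -(Gauss_dvdpr _ (irredp_coprime pNr)).
Qed.

Lemma ltn_dvdp_exp m a : a != 0 -> p ^+ m %| a -> (m < size a)%N.
Proof.
move=> a_neq0 /(dvdp_leq a_neq0); apply: leq_trans.
rewrite -(@prednK (size (p ^+ m))) ?size_poly_gt0 ?expf_neq0 // size_exp ltnS.
by rewrite leq_pmull // -ltnS prednK // ltnW.
Qed.

Lemma mult_polyE k r : r != 0 -> ~~ (p %| r) -> mult_poly p (p ^+ k * r) = k.
Proof.
move=> r_neq0 pNr.
have a_neq0 : p ^+ k * r != 0 by rewrite mulf_neq0 ?expf_neq0.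
have pk_dvd : p ^+ k %| p ^+ k * r by exact/dvdp_mulr/dvdpp.
apply/eqP; rewrite eqn_leq; apply/andP; split.
  apply/bigmax_leqP => i /= pi_dvd; rewrite leqNgt; apply: contra pNr => lt_ki.
  move: pi_dvd; rewrite -(subnKC (ltnW lt_ki)) exprD dvdp_mul2l ?expf_neq0 //.
  by apply: dvdp_trans; rewrite -{1}(expr1 p) dvdp_exp2l // subn_gt0.
have lt_k_size := ltn_dvdp_exp a_neq0 pk_dvd.
exact: (@leq_bigmax_cond _ (fun i : 'I__ => p ^+ i %| p ^+ k * r) val
  (Ordinal lt_k_size)).
Qed.

Lemma mult_poly_ndvdp r : r != 0 -> ~~ (p %| r) -> mult_poly p r = 0%N.
Proof. by move=> r_neq0 pNr; rewrite -[r]mul1r -(expr0 p) mult_polyE. Qed.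

Lemma mult_poly_factor a : a != 0 ->
  exists k r, [/\ a = p ^+ k * r, r != 0 & ~~ (p %| r)].
Proof.
elim: (size a) {-2}a (leqnn (size a)) => [|n IHn] b size_b b_neq0.
  by move: b_neq0; rewrite -size_poly_gt0; case: (size b) size_b.
have [pb|pNb] := boolP (p %| b); last by exists 0%N, b; rewrite mul1r.
have b_eq := divpK pb; set q := b %/ p in b_eq.
have q_neq0 : q != 0 by apply: contraNneq b_neq0 => q0; rewrite -b_eq q0 mul0r.
have /IHn/(_ q_neq0) [k [r [q_eq r_neq0 pNr]]] : (size q <= n)%N.
  move: size_b size_p_gt1; rewrite -b_eq size_mul //.
  have := q_neq0; rewrite -size_poly_gt0.
  by move: (size q) (size p) => x y; lia.
by exists k.+1, r; rewrite -b_eq q_eq exprSr mulrAC.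
Qed.

Lemma mult_polyM a b : a != 0 -> b != 0 ->
  mult_poly p (a * b) = (mult_poly p a + mult_poly p b)%N.
Proof.
move=> /mult_poly_factor [i [r [-> r_neq0 pNr]]].
move=> /mult_poly_factor [j [s [-> s_neq0 pNs]]].
rewrite mulrACA -exprD !mult_polyE ?mulf_neq0 //.
by rewrite irredp_dvdM negb_or pNr.
Qed.

Lemma ndvdp_pole_numerator X A P Q (m : nat) :
  [pchar F] =i pred0 -> coprimep p P -> ~~ (p %| A) -> ~~ (p %| Q) ->
  ~~ (p %| p * X - m.+1%:R * A * P * Q).
Proof.
move=> charF0 pP pNA pNQ.
rewrite dvdp_subr ?(dvdp_mulr X (dvdpp p)) // !irredp_dvdM.
rewrite (negbTE pNA) (negbTE pNQ) (negbTE (coprimep_ndvdp size_p_gt1 pP)) !orbF.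
apply: coprimep_ndvdp => //; rewrite -(scaler_nat m.+1 (1 : {poly F})).
by rewrite coprimepZr ?coprimep1 // ((pcharf0P F).1 charF0).
Qed.

End Multiplicity.

Section FractionField.
Variable R : idomainType.
Implicit Types a b c e : R.

Lemma tofrac_repr (g : {fraction R}) :
  g = (\n_(repr g))%:F / (\d_(repr g))%:F.
Proof.
rewrite -[g in LHS]reprK; set x := repr g.
have d_neq0 : (\d_x)%:F != 0 by rewrite tofrac_eq0 denom_ratioP.
apply: (mulIf d_neq0); rewrite mulfVK //; unlock FracField.tofrac.
change (FracField.mul (\pi_(FracField.type R) x)
  (\pi_(FracField.type R) (Ratio \d_x 1)) =
  \pi_(FracField.type R) (Ratio \n_x 1))%qT.
rewrite -FracField.pi_mul; apply/eqmodP; rewrite /= FracField.equivfE /FracField.mulf.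
by rewrite !numden_Ratio ?mulf_neq0 ?denom_ratioP ?oner_neq0 // !mulr1 mulrC.
Qed.

Lemma tofrac_div_eq a b c e : b != 0 -> e != 0 ->
  a%:F / b%:F = c%:F / e%:F -> a * e = c * b.
Proof.
move=> b_neq0 e_neq0 ab_ce; apply/eqP; rewrite -tofrac_eq !tofracM; apply/eqP.
have [bF eF] : b%:F != 0 /\ e%:F != 0 by rewrite !tofrac_eq0.
by rewrite -[a%:F](divfK bF) -[c%:F](divfK eF) ab_ce mulrAC.
Qed.

Lemma tofrac_divMl a b c : c != 0 -> (c * a)%:F / (c * b)%:F = a%:F / b%:F.
Proof.
move=> c_neq0; rewrite !tofracM invfM mulrACA divff ?mul1r //.
by rewrite tofrac_eq0.
Qed.

End FractionField.

Section Order.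
Variables (F : fieldType) (p : {poly F}).
Hypothesis p_irr : irreducible_poly p.
Implicit Types (a b A Q : {poly F}) (g : {fraction {poly F}}).

Let p_neq0 : p != 0 := irredp_neq0 p_irr.

Lemma nu_tofrac_div a b : a != 0 -> b != 0 ->
  nu p (a%:F / b%:F) = (mult_poly p a)%:Z - (mult_poly p b)%:Z.
Proof.
move=> a_neq0 b_neq0; rewrite /nu; set x := repr _.
have d_neq0 : \d_x != 0 by apply: denom_ratioP.
have ab_x := tofrac_repr (a%:F / b%:F); rewrite -/x in ab_x.
have n_neq0 : \n_x != 0.
  apply: contra_eq_neq ab_x => ->; rewrite tofrac0 mul0r.
  by rewrite mulf_eq0 invr_eq0 !tofrac_eq0 negb_or a_neq0.
move: (tofrac_div_eq b_neq0 d_neq0 ab_x) => /(congr1 (mult_poly p)).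
rewrite !mult_polyM //.
by move: (mult_poly p a) (mult_poly p b) (mult_poly p \n_x) (mult_poly p \d_x); lia.
Qed.

Lemma tofrac_div_factor g : g != 0 -> exists i j A Q,
  [/\ A != 0, Q != 0, ~~ (p %| A), ~~ (p %| Q) &
      g = (p ^+ i * A)%:F / (p ^+ j * Q)%:F].
Proof.
move=> g_neq0; have g_eq := tofrac_repr g; set x := repr g in g_eq.
have d_neq0 : \d_x != 0 by apply: denom_ratioP.
have n_neq0 : \n_x != 0.
  by apply: contraNneq g_neq0 => n0; rewrite g_eq n0 tofrac0 mul0r.
have [i [A [n_eq A_neq0 pNA]]] := mult_poly_factor p_irr n_neq0.
have [j [Q [d_eq Q_neq0 pNQ]]] := mult_poly_factor p_irr d_neq0.
by exists i, j, A, Q; rewrite g_eq n_eq d_eq.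
Qed.

Lemma nu_ge0_tofrac_div g : g != 0 -> 0 <= nu p g ->
  exists B Q, [/\ Q != 0, ~~ (p %| Q) & g = B%:F / Q%:F].
Proof.
move=> /tofrac_div_factor [i [j [A [Q [A_neq0 Q_neq0 pNA pNQ g_eq]]]]].
rewrite g_eq nu_tofrac_div ?mulf_neq0 ?expf_neq0 // !mult_polyE // subr_ge0 lez_nat.
move=> le_ji; exists (p ^+ (i - j) * A), Q; split => //.
by rewrite -(subnKC le_ji) exprD -mulrA tofrac_divMl ?expf_neq0 // subnKC.
Qed.

Lemma nu_lt0_tofrac_div g : g != 0 -> nu p g < 0 ->
  exists m A Q, [/\ Q != 0, ~~ (p %| A), ~~ (p %| Q),
    nu p g = - (m.+1)%:Z & g = A%:F / (p ^+ m.+1 * Q)%:F].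
Proof.
move=> /tofrac_div_factor [i [j [A [Q [A_neq0 Q_neq0 pNA pNQ g_eq]]]]].
rewrite g_eq nu_tofrac_div ?mulf_neq0 ?expf_neq0 // !mult_polyE // subr_lt0 ltz_nat.
move=> lt_ij; exists (j - i).-1, A, Q; rewrite prednK ?subn_gt0 //.
split => //; first lia.
by rewrite -(subnKC (ltnW lt_ij)) addKn exprD -mulrA tofrac_divMl ?expf_neq0.
Qed.

End Order.

Section Derivation.
Variables (K : fieldType) (D : K -> K).
Hypothesis D_der : is_derivation D.

Let DD : forall x y, D (x + y) = D x + D y := D_der.1.
Let DM : forall x y, D (x * y) = D x * y + x * D y := D_der.2.

Lemma derivation0 : D 0 = 0.
Proof. by apply: (@addrI _ (D 0)); rewrite -DD !addr0. Qed.

Lemma derivation1 : D 1 = 0.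
Proof.
by apply: (@addrI _ (D 1)); rewrite addr0 -[in RHS](mulr1 1) DM mulr1 mul1r.
Qed.

Lemma derivationV x : x != 0 -> D x^-1 = - D x / x ^+ 2.
Proof.
move=> x_neq0; have := DM x x^-1; rewrite divff // derivation1 => /esym /eqP.
rewrite addrC addr_eq0 => /eqP Dx_inv; apply: (mulfI x_neq0).
by rewrite Dx_inv; field.
Qed.

Lemma derivation_div x y : y != 0 -> D (x / y) = (D x * y - x * D y) / y ^+ 2.
Proof. by move=> y_neq0; rewrite DM derivationV //; field. Qed.

Lemma derivationXS x n : D (x ^+ n.+1) = n.+1%:R * x ^+ n * D x.
Proof.
elim: n => [|n IHn]; first by rewrite expr1 expr0 mulr1 mul1r.
by rewrite exprSr DM IHn exprSr; ring.
Qed.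

Lemma derivation_div_pole a b c m : b != 0 -> c != 0 ->
  D (a / (b ^+ m.+1 * c)) =
  (b * (D a * c - a * D c) - m.+1%:R * a * D b * c) / (b ^+ m.+2 * (c * c)).
Proof.
move=> b_neq0 c_neq0; have bm_neq0 : b ^+ m != 0 by rewrite expf_neq0.
rewrite derivation_div ?mulf_neq0 ?expf_neq0 // DM derivationXS !exprS.
by field; rewrite bm_neq0 b_neq0 c_neq0.
Qed.

End Derivation.

Section MonomialExtension.
Variables (F : fieldType) (d : F -> F).
Variable D : {fraction {poly F}} -> {fraction {poly F}}.
Hypothesis D_mon : monomial_ext d D.
Implicit Types (P : {poly F}) (g h : {fraction {poly F}}).

Let D_der : is_derivation D := D_mon.2.1.

Lemma monomial_ext_tofrac P : exists P', D P%:F = P'%:F.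
Proof.
have [_ [_ [D_const [q DX]]]] := D_mon.
elim/poly_ind: P => [|P c [P' DP]]; first by exists 0; rewrite tofrac0 derivation0.
exists (P' * 'X + P * q + (d c)%:P).
by rewrite !tofracD !tofracM D_der.1 D_der.2 DP DX D_const.
Qed.

Variable p : {poly F}.
Hypothesis p_irr : irreducible_poly p.

Let p_neq0 : p != 0 := irredp_neq0 p_irr.

Lemma nu_derivation_ge0 g :
  g != 0 -> 0 <= nu p g -> D g != 0 -> 0 <= nu p (D g).
Proof.
move=> g_neq0 /(nu_ge0_tofrac_div p_irr g_neq0) [B [Q [Q_neq0 pNQ ->]]] Dg_neq0.
have [B' DB] := monomial_ext_tofrac B; have [Q' DQ] := monomial_ext_tofrac Q.
have Dg : D (B%:F / Q%:F) = (B' * Q - B * Q')%:F / (Q * Q)%:F.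
  by rewrite derivation_div ?tofrac_eq0 // DB DQ tofracB !tofracM expr2.
have N_neq0 : B' * Q - B * Q' != 0.
  by apply: contraNneq Dg_neq0 => N0; rewrite Dg N0 tofrac0 mul0r.
rewrite Dg nu_tofrac_div ?mulf_neq0 // mult_polyM //.
by rewrite (mult_poly_ndvdp p_irr Q_neq0 pNQ) subr0.
Qed.

Lemma nu_derivation_lt0 g : [pchar F] =i pred0 -> normal_poly D p ->
  g != 0 -> nu p g < 0 -> D g != 0 /\ nu p (D g) = nu p g - 1.
Proof.
move=> charF0 [P' [DP pP']] g_neq0.
move=> /(nu_lt0_tofrac_div p_irr g_neq0) [m [A [Q [Q_neq0 pNA pNQ -> ->]]]].
have [A' DA] := monomial_ext_tofrac A; have [Q' DQ] := monomial_ext_tofrac Q.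
set N := p * (A' * Q - A * Q') - m.+1%:R * A * P' * Q.
have pNN : ~~ (p %| N) by apply: ndvdp_pole_numerator.
have N_neq0 : N != 0 by apply: contraNneq pNN => ->; rewrite dvdp0.
have pNQQ : ~~ (p %| Q * Q) by rewrite irredp_dvdM // negb_or pNQ.
have den_neq0 : p ^+ m.+2 * (Q * Q) != 0 by rewrite mulf_neq0 ?expf_neq0 ?mulf_neq0.
have Dg : D (A%:F / (p ^+ m.+1 * Q)%:F) = N%:F / (p ^+ m.+2 * (Q * Q))%:F.
  rewrite tofracM tofracXn derivation_div_pole ?tofrac_eq0 // DA DQ DP.
  by rewrite /N (tofracM (p ^+ m.+2)) tofracXn !(tofracB, tofracM) rmorph_nat.
split; first by rewrite Dg mulf_eq0 invr_eq0 !tofrac_eq0 negb_or N_neq0.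
rewrite Dg nu_tofrac_div // mult_poly_ndvdp // mult_polyE ?mulf_neq0 //.
lia.
Qed.

Lemma nu_antiderivative_lt0 g h : [pchar F] =i pred0 -> normal_poly D p ->
  D h = g -> g != 0 -> nu p g < 0 ->
  [/\ h != 0, nu p h < 0 & nu p h = nu p g + 1].
Proof.
move=> charF0 p_normal <- Dh_neq0 nu_Dh_lt0.
have h_neq0 : h != 0 by apply: contraNneq Dh_neq0 => ->; rewrite derivation0.
have nu_h_lt0 : nu p h < 0.
  rewrite ltNge; apply: contraTN nu_Dh_lt0 => nu_h_ge0.
  by rewrite -leNgt nu_derivation_ge0.
have [_ ->] := nu_derivation_lt0 charF0 p_normal h_neq0 nu_h_lt0.
by rewrite subrK.
Qed.

End MonomialExtension.

Unset Implicit Arguments.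

Theorem corollary2p15 (F : fieldType) (d : F -> F)
  (D : {fraction {poly F}} -> {fraction {poly F}}) (f : {fraction {poly F}}) :
  [pchar F] =i pred0 ->
  monomial_ext d D ->
  stable D f ->
  forall p : {poly F}, irreducible_poly p -> normal_poly D p ->
  f != 0 -> 0 <= nu p f.
Proof.
move=> charF0 D_mon [a [a0 Da]] p p_irr p_normal f_neq0.
rewrite leNgt; apply/negP => nu_f_lt0.
have nu_a i : [/\ a i != 0, nu p (a i) < 0 & nu p (a i) = nu p f + i%:Z].
  elim: i => [|i [ai_neq0 nu_ai_lt0 nu_ai]].
    by rewrite a0 f_neq0 nu_f_lt0 addr0.
  have [-> -> ->] :=
    nu_antiderivative_lt0 D_mon p_irr charF0 p_normal (Da i) ai_neq0 nu_ai_lt0.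
  by rewrite nu_ai -addrA -[in RHS]addn1 PoszD.
have [_ nu_lt0 nu_eq] := nu_a `|nu p f|%N.
by move: nu_f_lt0 nu_lt0; rewrite nu_eq; lia.
Qed.
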